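(* Let $u$ be a quasi-definite linear functional on $\mathbb C[\boldsymbol x]$, $\boldsymbol\gamma:I\to\mathbb R^D$ a smooth curve on an interval $I\subset\mathbb R$, $w:I\to\mathbb C$ a weight, $v$ the linear functional $\langle v,P\rangle=\int_IP(\boldsymbol\gamma(s))w(s)\,ds$, and $\hat u=u+v$, assumed quasi-definite. Put $\pi_{[m]}(t)=P_{[m]}(\boldsymbol\gamma(t))$, $\hat\pi_{[n]}(t)=\hat P_{[n]}(\boldsymbol\gamma(t))$ and $A_{[l],[m]}=\int_I\pi_{[l]}(s)\pi_{[m]}(s)^\top w(s)\,ds$. Then for $n\ge1$ $$\hat\pi_{[n]}(t)=\Theta_*\begin{pmatrix}H_{[0]}+A_{[0],[0]}&\cdots&A_{[0],[n-1]}&\pi_{[0]}(t)\\ \vdots&\ddots&\vdots&\vdots\\ A_{[n-1],[0]}&\cdots&H_{[n-1]}+A_{[n-1],[n-1]}&\pi_{[n-1]}(t)\\ A_{[n],[0]}&\cdots&A_{[n],[n-1]}&\pi_{[n]}(t)\end{pmatrix},$$ and $$\hat P_{[n]}(\boldsymbol x)=P_{[n]}(\boldsymbol x)-\int_I\hat\pi_{[n]}(s)K_{n-1}(\boldsymbol\gamma(s),\boldsymbol x)w(s)\,ds,\qquad \hat H_{[n]}=H_{[n]}+\int_I\hat\pi_{[n]}(s)\pi_{[n]}(s)^\top w(s)\,ds.$$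
   Context: Multi-indices ordered by graded lexicographic order; $\chi(\boldsymbol x)$ the semi-infinite vector of monomials with blocks $\chi_{[k]}$. For a linear functional $u$ on $\mathbb C[\boldsymbol x]$ (applied entrywise), moment matrix $G=\langle u,\chi\chi^\top\rangle$; quasi-definite: all block truncations nonsingular; then $G=S^{-1}HS^{-\top}$ with $S$ block lower unitriangular and $H$ block diagonal with blocks $H_{[k]}$; $P=S\chi$ with blocks $P_{[k]}$ are the monic orthogonal polynomials; hats refer to $\hat u$. $K_{n-1}(\boldsymbol x,\boldsymbol y)=\sum_{m=0}^{n-1}P_{[m]}(\boldsymbol x)^\top H_{[m]}^{-1}P_{[m]}(\boldsymbol y)$. Last quasi-determinant: $\Theta_*\begin{pmatrix}A&B\\C&D\end{pmatrix}=D-CA^{-1}B$, last block row/column being the last displayed ones. *)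

From HB Require Import structures.
From mathcomp Require Import all_boot all_order all_algebra.
From mathcomp Require Import mpoly.
From mathcomp Require Import complex.
From mathcomp Require Import classical_sets boolp reals ereal set_interval
  topology normedtype derive measure lebesgue_measure lebesgue_integral.

Set Implicit Arguments.
Unset Strict Implicit.
Unset Printing Implicit Defensive.

Import Order.TTheory GRing.Theory Num.Theory.
Import numFieldNormedType.Exports.
Local Open Scope ring_scope.

Section Defs.
Variables (R : realType) (D : nat).
Local Notation C := R[i].
Local Notation mon := 'X_{1..D}.
Local Notation poly := {mpoly C[D]}.

(* monomials (multi-indices) of total degree < n : the indices of the
   first n blocks [0],...,[n-1] *)
Local Notation lmon n := ('X_{1..D < n}).
(* monomials of total degree exactly k : the indices of block [k] *)
Definition dmon (k : nat) := {m : 'X_{1..D < k.+1} | mdeg m == k}.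
Definition dmon_val k (a : dmon k) : mon := bmnm (val a).

(* a matrix with rows/columns indexed by a finType T, viewed as a mathcomp
   square matrix (via an enumeration of T; all uses below are independent
   of the enumeration). *)
Definition fmx (T : finType) (f : T -> T -> C) : 'M[C]_#|T| :=
  \matrix_(i, j) f (enum_val i) (enum_val j).
Definition finv (T : finType) (f : T -> T -> C) : T -> T -> C :=
  fun a b => invmx (fmx f) (enum_rank a) (enum_rank b).

(* last quasi-determinant of the block matrix ( A B ; Cm Dm ) :
   Theta_* = Dm - Cm A^{-1} B *)
Definition qdet_last (T U V : finType) (A : T -> T -> C) (B : T -> U -> C)
  (Cm : V -> T -> C) (Dm : V -> U -> C) : V -> U -> C :=
  fun v x => Dm v x - \sum_(a : T) \sum_(b : T) Cm v a * finv A a b * B b x.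

Definition linear_functional (u : poly -> C) : Prop :=
  forall (c : C) (p q : poly), u (c *: p + q) = c * u p + u q.

Definition moment (u : poly -> C) (a b : mon) : C := u ('X_[a] * 'X_[b]).

Definition quasi_definite (u : poly -> C) : Prop :=
  forall N : nat, fmx (fun a b : lmon N => moment u a b) \in unitmx.

Definition block_lower_unitriangular (S : mon -> mon -> C) : Prop :=
  forall a b : mon,
    ((mdeg a < mdeg b)%N -> S a b = 0) /\
    (mdeg a = mdeg b -> S a b = (a == b)%:R).

Definition block_diagonal (H : mon -> mon -> C) : Prop :=
  forall a b : mon, mdeg a <> mdeg b -> H a b = 0.

(* (S G S^T)(a,b); the sums are finite since S is block lower triangular *)
Definition sandwich (S G : mon -> mon -> C) (a b : mon) : C :=
  \sum_(c : lmon (mdeg a).+1) \sum_(d : lmon (mdeg b).+1)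
     S a c * G c d * S b d.

(* S, H give the Gauss-Borel factorization G = S^{-1} H S^{-T} of the
   moment matrix of u (equivalently S G S^T = H) *)
Definition gauss_borel (u : poly -> C) (S H : mon -> mon -> C) : Prop :=
  [/\ block_lower_unitriangular S, block_diagonal H &
      forall a b : mon, sandwich S (moment u) a b = H a b].

Definition OP (S : mon -> mon -> C) (a : mon) : poly :=
  \sum_(c : lmon (mdeg a).+1) S a c *: 'X_[c].

Definition Hinv (H : mon -> mon -> C) (m : nat) : dmon m -> dmon m -> C :=
  finv (fun a b : dmon m => H (dmon_val a) (dmon_val b)).

Definition CDkernel (S H : mon -> mon -> C) (N : nat) (y x : 'I_D -> C) : C :=
  \sum_(m < N.+1) \sum_(a : dmon m) \sum_(b : dmon m)
     (OP S (dmon_val a)).@[y] * Hinv H a b * (OP S (dmon_val b)).@[x].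

Local Open Scope complex_scope.

Definition ptC (gam : R -> 'I_D -> R) (s : R) : 'I_D -> C :=
  fun i => (gam s i)%:C.

Definition cint (I : interval R) (f : R -> C) : C :=
  (Rintegral lebesgue_measure [set` I] (fun s => complex.Re (f s)))%:C
  + 'i * (Rintegral lebesgue_measure [set` I] (fun s => complex.Im (f s)))%:C.

Definition cintegrable (I : interval R) (f : R -> C) : Prop :=
  lebesgue_measure.-integrable [set` I] (fun s => (complex.Re (f s))%:E) /\
  lebesgue_measure.-integrable [set` I] (fun s => (complex.Im (f s))%:E).

Definition smooth_curve (I : interval R) (gam : R -> 'I_D -> R) : Prop :=
  forall (i : 'I_D) (k : nat) (t : R), interior ([set` I] : set R) t ->
    derivable (derive1n k (fun s => gam s i)) t 1.

Definition curve_functional (I : interval R) (gam : R -> 'I_D -> R)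
  (w : R -> C) (p : poly) : C :=
  cint I (fun s => p.@[ptC gam s] * w s).

Definition pi_curve (S : mon -> mon -> C) (gam : R -> 'I_D -> R)
  (a : mon) (t : R) : C :=
  (OP S a).@[ptC gam t].

Definition Amat (I : interval R) (S : mon -> mon -> C) (gam : R -> 'I_D -> R)
  (w : R -> C) (a b : mon) : C :=
  cint I (fun s => pi_curve S gam a s * pi_curve S gam b s * w s).

End Defs.

Notation lmon D n := ('X_{1..D < n}) (only parsing).

From Pilot Require Import Defs.
From HB Require Import structures.
From mathcomp Require Import all_boot all_order all_algebra.
From mathcomp Require Import mpoly ring.
From mathcomp Require Import complex.
From mathcomp Require Import classical_sets boolp reals ereal set_interval
  topology normedtype derive measure lebesgue_measure lebesgue_integral.
Import Order.TTheory GRing.Theory Num.Theory.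
Local Open Scope ring_scope.
Set Implicit Arguments.
Unset Strict Implicit.

(* As [Ph_[n]] and [P_[n]] are both monic of
   degree n, [Ph_[n] - P_[n]] has degree < n and is determined by its pairings
   with the [P_[m]], m < n.
   - Against [u]: [u (Ph_[n] P_[m]) = - v (Ph_[n] P_[m])] by [uh]-orthogonality
     and [u (P_[n] P_[m]) = 0]; expanding [Ph_[n] - P_[n]] in the
     [u]-orthogonal basis gives the Christoffel-Darboux kernel formula.
   - Against [uh]: the Gram matrix [uh (P_[l] P_[m]^T) = H_[l] delta_lm + A_[l],[m]]
     is nonsingular, and solving the resulting linear system for the
     coefficients of [Ph_[n]] gives the quasi-determinant formula.
   Finally [Hh_[n] = uh (Ph_[n] P_[n]^T) = H_[n] + v (Ph_[n] P_[n]^T)]. *)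

Section ComplexIntegral.
Variable R : realType.
Local Notation mu := (@lebesgue_measure R).

Lemma Rintegral_scale_add (I : interval R) (f g : R -> R) (k : R) :
  mu.-integrable [set` I] (EFin \o f) -> mu.-integrable [set` I] (EFin \o g) ->
  Rintegral mu [set` I] (fun s => k * f s + g s) =
  k * Rintegral mu [set` I] f + Rintegral mu [set` I] g.
Proof.
move=> hf hg.
have hkf : mu.-integrable [set` I] (EFin \o (fun s => k * f s)).
  have := integrableZl _ k hf; move/(_ (measurable_itv I)).
  by congr (_.-integrable _ _); apply: funext => s /=; rewrite EFinM.
have := RintegralD _ hkf hg; move/(_ (measurable_itv I)) => ->.
by have := RintegralZl _ _ hf; move/(_ k (measurable_itv I)) => ->.
Qed.

Lemma cintegrable_scale_add (I : interval R) (f g : R -> R) (k : R) :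
  mu.-integrable [set` I] (EFin \o f) -> mu.-integrable [set` I] (EFin \o g) ->
  mu.-integrable [set` I] (EFin \o (fun s => k * f s + g s)).
Proof.
move=> hf hg.
have hkf : mu.-integrable [set` I] (EFin \o (fun s => k * f s)).
  have := integrableZl _ k hf; move/(_ (measurable_itv I)).
  by congr (_.-integrable _ _); apply: funext => s /=; rewrite EFinM.
have := integrableD _ hkf hg; move/(_ (measurable_itv I)).
by congr (_.-integrable _ _); apply: funext => s /=; rewrite EFinD.
Qed.

Lemma eq_cint (I : interval R) (f g : R -> R[i]) :
  (forall s, f s = g s) -> cint I f = cint I g.
Proof. by move=> efg; congr cint; apply: funext. Qed.

Lemma cint_scale_add (I : interval R) (f g : R -> R[i]) (c : R[i]) :
  cintegrable I f -> cintegrable I g ->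
  cint I (fun s => c * f s + g s) = c * cint I f + cint I g.
Proof.
case=> [fr fi] [gr gi]; case: c => a b; rewrite /cint.
have -> : (fun s => complex.Re ((a +i* b)%C * f s + g s)) =
    (fun s => a * complex.Re (f s) + ((- b) * complex.Im (f s) + complex.Re (g s))).
  by apply: funext => s; case: (f s) => ? ?; case: (g s) => ? ? /=; rewrite mulNr addrA.
have -> : (fun s => complex.Im ((a +i* b)%C * f s + g s)) =
    (fun s => a * complex.Im (f s) + (b * complex.Re (f s) + complex.Im (g s))).
  by apply: funext => s; case: (f s) => ? ?; case: (g s) => ? ? /=; rewrite addrA.
rewrite !Rintegral_scale_add //; try exact: cintegrable_scale_add.
set x1 := Rintegral _ _ _; set x2 := Rintegral _ _ _.
set x3 := Rintegral _ _ _; set x4 := Rintegral _ _ _.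
by apply/eqP; rewrite eq_complex /=; apply/andP; split; apply/eqP; ring.
Qed.

End ComplexIntegral.

Section FinMatrix.
Variable R : realType.
Local Notation C := R[i].

Lemma sum_enum_val (T : finType) (F : T -> C) :
  \sum_(k < #|T|) F (enum_val k) = \sum_(x : T) F x.
Proof. by rewrite (reindex (@enum_val T T)) //; apply: onW_bij; exact: enum_val_bij. Qed.

Lemma mulVfmx (T : finType) (f : T -> T -> C) : fmx f \in unitmx ->
  forall a c : T, \sum_(b : T) Defs.finv f a b * f b c = (a == c)%:R.
Proof.
move=> f_unit a c; have := mulVmx f_unit.
move/matrixP/(_ (enum_rank a) (enum_rank c)); rewrite !mxE (inj_eq enum_rank_inj) => <-.
rewrite -sum_enum_val; apply: eq_bigr => k _.
by rewrite /fmx /Defs.finv !mxE enum_rankK enum_valK.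
Qed.

Lemma mulfmxV (T : finType) (f : T -> T -> C) : fmx f \in unitmx ->
  forall a c : T, \sum_(b : T) f a b * Defs.finv f b c = (a == c)%:R.
Proof.
move=> f_unit a c; have := mulmxV f_unit.
move/matrixP/(_ (enum_rank a) (enum_rank c)); rewrite !mxE (inj_eq enum_rank_inj) => <-.
rewrite -sum_enum_val; apply: eq_bigr => k _.
by rewrite /fmx /Defs.finv !mxE enum_rankK enum_valK.
Qed.

Lemma fmx_unitP (T : finType) (f : T -> T -> C) :
  fmx f \in unitmx <->
  (forall y : T -> C, (forall c, \sum_(b : T) y b * f b c = 0) -> forall b, y b = 0).
Proof.
split=> [f_unit y yf0 b | f_free].
  have : \sum_c (\sum_b y b * f b c) * Defs.finv f c b = 0.
    by apply: big1 => c _; rewrite yf0 mul0r.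
  under eq_bigr do rewrite mulr_suml.
  rewrite exchange_big /=.
  under eq_bigr do (under eq_bigr do rewrite -mulrA; rewrite -mulr_sumr mulfmxV //).
  rewrite (bigD1 b) //= eqxx mulr1 big1 ?addr0 // => b' /negbTE->.
  by rewrite mulr0.
rewrite -row_free_unit -kermx_eq0; apply/negPn/negP.
move/rowV0Pn => [v /sub_kermxP vf]; apply/negP; rewrite negbK.
apply/eqP/rowP => k; rewrite mxE -[k]enum_valK.
apply: (f_free (fun b => v 0 (enum_rank b))) => c.
move/matrixP/(_ 0 (enum_rank c)): vf; rewrite !mxE => vf0.
rewrite -[RHS]vf0 -[LHS]sum_enum_val; apply: eq_bigr => j _.
by rewrite /fmx !mxE enum_rankK enum_valK.
Qed.

End FinMatrix.

Section LinearFunctional.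
Variables (R : realType) (D : nat).
Local Notation C := R[i].
Local Notation poly := {mpoly C[D]}.
Variable phi : poly -> C.
Hypothesis phi_lin : linear_functional phi.

Lemma lfunD p q : phi (p + q) = phi p + phi q.
Proof. by have := phi_lin 1 p q; rewrite scale1r mul1r. Qed.

Lemma lfun0 : phi 0 = 0.
Proof. by apply: (addrI (phi 0)); rewrite -lfunD !addr0. Qed.

Lemma lfunZ c p : phi (c *: p) = c * phi p.
Proof. by have := phi_lin c p 0; rewrite !addr0 lfun0 addr0. Qed.

Lemma lfunB p q : phi (p - q) = phi p - phi q.
Proof. by rewrite lfunD -scaleN1r lfunZ mulN1r. Qed.

Lemma lfun_sum (I : Type) (r : seq I) (P : pred I) (F : I -> poly) :
  phi (\sum_(i <- r | P i) F i) = \sum_(i <- r | P i) phi (F i).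
Proof. exact: (big_morph phi lfunD lfun0). Qed.

Lemma linear_functional_add (psi : poly -> C) : linear_functional psi ->
  linear_functional (fun p => phi p + psi p).
Proof. by move=> psi_lin c p q; rewrite phi_lin psi_lin mulrDr addrACA. Qed.

End LinearFunctional.

Lemma curve_functional_linear (R : realType) (D : nat) (I : interval R)
    (gam : R -> 'I_D -> R) (w : R -> R[i]) :
  (forall p : {mpoly R[i][D]}, cintegrable I (fun s => p.@[ptC gam s] * w s)) ->
  linear_functional (curve_functional I gam w).
Proof.
move=> hint c p q; rewrite /curve_functional -cint_scale_add //.
by apply: eq_cint => s; rewrite mevalD mevalZ mulrDl mulrA.
Qed.

Section MonicBasis.
Variables (R : realType) (D : nat).
Local Notation C := R[i].
Local Notation mon := 'X_{1..D}.
Local Notation poly := {mpoly C[D]}.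
Implicit Types (S T : mon -> mon -> C) (p q : poly) (a m : mon).

Lemma mcoeff_msize_le p m : (msize p <= mdeg m)%N -> p@_m = 0.
Proof. by move=> /msize_mdeg_ge; exact: memN_msupp_eq0. Qed.

Lemma msize_le_mcoeff k p :
  (forall m, (k <= mdeg m)%N -> p@_m = 0) -> (msize p <= k)%N.
Proof.
move=> p_high; rewrite msizeE; apply/bigmax_leqP_seq => m; rewrite mcoeff_msupp => pm _.
by rewrite ltnNge; apply/negP => /p_high pm0; rewrite pm0 eqxx in pm.
Qed.

Lemma msizeD_leq k p q : (msize p <= k)%N -> (msize q <= k)%N -> (msize (p + q) <= k)%N.
Proof. by move=> hp hq; apply: leq_trans (msizeD_le p q) _; rewrite geq_max hp. Qed.

Lemma msize_sum_leq k (I : Type) (r : seq I) (P : pred I) (F : I -> poly) :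
  (forall i, P i -> (msize (F i) <= k)%N) -> (msize (\sum_(i <- r | P i) F i) <= k)%N.
Proof.
move=> hF; apply: (big_ind (fun p => msize p <= k)%N) => //.
  by rewrite msize0.
exact: msizeD_leq.
Qed.

Lemma sum_lmon_delta k (F : mon -> C) m :
  \sum_(c : 'X_{1..D < k}) F c * ((c : mon) == m)%:R =
  if (mdeg m < k)%N then F m else 0.
Proof.
case: ifP => mk.
  rewrite (bigD1 (BMultinom mk)) //= eqxx mulr1 big1 ?addr0 // => c cm.
  case: eqP => [e|]; last by rewrite mulr0.
  have ce : c = BMultinom mk by exact: val_inj.
  by rewrite ce eqxx in cm.
apply: big1 => c _; case: eqP => [e|]; last by rewrite mulr0.
by move: mk; rewrite -e bmdeg.
Qed.

Lemma mcoeff_OP S a m : block_lower_unitriangular S -> (OP S a)@_m = S a m.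
Proof.
move=> S_tri; rewrite /OP raddf_sum /=.
under eq_bigr do rewrite mcoeffZ mcoeffX.
rewrite sum_lmon_delta; case: ifP => // am.
by rewrite (S_tri a m).1 // ltnNge -ltnS am.
Qed.

Lemma msize_OP S a : (msize (OP S a) <= (mdeg a).+1)%N.
Proof.
apply: msize_sum_leq => c _; apply: leq_trans (msizeZ_le _ _) _.
by rewrite msizeX; exact: bmdeg.
Qed.

Lemma msize_OP_leq S a k : (mdeg a < k)%N -> (msize (OP S a) <= k)%N.
Proof. exact: leq_trans (msize_OP S a). Qed.

Lemma msizeZ_OP_leq S a k (c : C) : (mdeg a < k)%N -> (msize (c *: OP S a) <= k)%N.
Proof. by move=> ak; apply: leq_trans (msizeZ_le _ _) (msize_OP_leq _ ak). Qed.

Lemma msize_OPB S T a : block_lower_unitriangular S -> block_lower_unitriangular T ->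
  (msize (OP S a - OP T a) <= mdeg a)%N.
Proof.
move=> S_tri T_tri; apply: msize_le_mcoeff => m.
rewrite mcoeffB !mcoeff_OP // leq_eqVlt => /orP[/eqP am|am].
  by rewrite (S_tri a m).2 // (T_tri a m).2 // subrr.
by rewrite (S_tri a m).1 // (T_tri a m).1 // subrr.
Qed.

Lemma OP_free S k (y : 'X_{1..D < k} -> C) : block_lower_unitriangular S ->
  \sum_(b : 'X_{1..D < k}) y b *: OP S b = 0 -> forall b, y b = 0.
Proof.
move=> S_tri Y0.
have y_tri m : \sum_(b : 'X_{1..D < k}) y b * S b m = 0.
  have := congr1 (mcoeff m) Y0; rewrite mcoeff0 raddf_sum /= => Y0m.
  by rewrite -[RHS]Y0m; apply: eq_bigr => b _; rewrite mcoeffZ mcoeff_OP.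
suff yb : forall j (b : 'X_{1..D < k}), (k <= mdeg b + j)%N -> y b = 0.
  by move=> b; apply: (yb k); rewrite leq_addl.
elim=> [|j IH] b kb.
  by have := bmdeg b; rewrite ltnNge -(addn0 (mdeg b)) kb.
have := y_tri b; rewrite (bigD1 b) //= big1.
  by rewrite addr0 (S_tri b b).2 // eqxx mulr1.
move=> b' b'b; case: (ltngtP (mdeg b') (mdeg b)) => e.
- by rewrite (S_tri b' b).1 // mulr0.
- by rewrite IH ?mul0r // (leq_trans kb) // addnS -addSn leq_add2r.
- rewrite (S_tri b' b).2 //; case: eqP => [eb|]; last by rewrite mulr0.
  have b'E : b' = b by exact: val_inj.
  by rewrite b'E eqxx in b'b.
Qed.

End MonicBasis.

Section Orthogonality.
Variables (R : realType) (D : nat).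
Local Notation C := R[i].
Local Notation mon := 'X_{1..D}.
Local Notation poly := {mpoly C[D]}.
Implicit Types (S : mon -> mon -> C) (E : poly) (c d : mon).
Variable phi : poly -> C.
Hypothesis phi_lin : linear_functional phi.

Lemma lfun_mulX_eq0 S E k : block_lower_unitriangular S ->
  (forall d, (mdeg d < k)%N -> phi (E * OP S d) = 0) ->
  forall c, (mdeg c < k)%N -> phi (E * 'X_[c]) = 0.
Proof.
move=> S_tri EP0.
(* [OP S c] is ['X_[c]] plus terms of lower degree. *)
suff EX0 : forall j c, (mdeg c < j)%N -> (mdeg c < k)%N -> phi (E * 'X_[c]) = 0.
  by move=> c; exact: EX0.
elim=> [//|j IH] c cj ck.
have := EP0 c ck; rewrite /OP mulr_sumr lfun_sum //.
rewrite (bigD1 (BMultinom (ltnSn (mdeg c)))) //= big1.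
  by rewrite addr0 -scalerAr lfunZ // (S_tri c c).2 // eqxx mul1r.
move=> d dc; rewrite -scalerAr lfunZ //.
case: (ltngtP (mdeg d) (mdeg c)) => e.
- by rewrite (IH d) ?mulr0 //; [exact: leq_trans e cj | exact: ltn_trans e ck].
- by have := bmdeg d; rewrite ltnS leqNgt e.
- rewrite (S_tri c d).2 //; case: eqP => [ed|]; last by rewrite mul0r.
  have dE : d = BMultinom (ltnSn (mdeg c)) by exact: val_inj.
  by rewrite dE eqxx in dc.
Qed.

Hypothesis phi_qd : quasi_definite phi.

Lemma quasi_definite_eq0 E k : (msize E <= k)%N ->
  (forall c, (mdeg c < k)%N -> phi (E * 'X_[c]) = 0) -> E = 0.
Proof.
move=> Ek EX0; apply/mpolyP => m; rewrite mcoeff0.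
case: (ltnP (mdeg m) k) => mk; last exact: mcoeff_msize_le (leq_trans Ek mk).
have -> : m = BMultinom mk by [].
apply: (fmx_unitP _).1 (phi_qd k) (fun c : 'X_{1..D < k} => E@_c) _ _ => c.
rewrite -[RHS](EX0 c (bmdeg c)) [E in RHS](mpolywE Ek) mulr_suml lfun_sum //.
by apply: eq_bigr => b _; rewrite -scalerAl lfunZ.
Qed.

Lemma quasi_definite_OP_eq0 S E k : block_lower_unitriangular S -> (msize E <= k)%N ->
  (forall d, (mdeg d < k)%N -> phi (E * OP S d) = 0) -> E = 0.
Proof. by move=> S_tri Ek EP0; apply: quasi_definite_eq0 Ek _; exact: lfun_mulX_eq0 EP0. Qed.

Lemma gram_OP_unit S k (M : 'X_{1..D < k} -> 'X_{1..D < k} -> C) :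
  block_lower_unitriangular S ->
  (forall b c : 'X_{1..D < k}, phi (OP S b * OP S c) = M b c) ->
  fmx M \in unitmx.
Proof.
move=> S_tri PPM; apply/fmx_unitP => y yM0.
apply: (OP_free S_tri); apply: (quasi_definite_OP_eq0 S_tri).
  by apply: msize_sum_leq => b _; exact: msizeZ_OP_leq (bmdeg b).
move=> d dk; rewrite mulr_suml lfun_sum //; apply: etrans (yM0 (BMultinom dk)).
by apply: eq_bigr => b _; rewrite -scalerAl lfunZ // -(PPM b (BMultinom dk)).
Qed.

End Orthogonality.

Section Blocks.
Variable D : nat.
Local Notation mon := 'X_{1..D}.

Lemma mdeg_dmon_val m (b : dmon D m) : mdeg (dmon_val b) = m.
Proof. exact/eqP/(valP b). Qed.

Lemma dmon_val_inj m : injective (@dmon_val D m).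
Proof. by move=> a b /val_inj/val_inj. Qed.

Definition dmon_of (d : mon) : dmon D (mdeg d) :=
  exist _ (BMultinom (ltnSn (mdeg d))) (eqxx (mdeg d)).

End Blocks.

Section GaussBorel.
Variables (R : realType) (D : nat).
Local Notation C := R[i].
Local Notation mon := 'X_{1..D}.
Local Notation poly := {mpoly C[D]}.
Implicit Types (T : mon -> mon -> C) (E Q : poly) (a b c d : mon).
Variables (phi : poly -> C) (S H : mon -> mon -> C).
Hypotheses (phi_lin : linear_functional phi) (phi_GB : gauss_borel phi S H).

Let S_tri : block_lower_unitriangular S. Proof. by case: phi_GB. Qed.
Let H_diag : block_diagonal H. Proof. by case: phi_GB. Qed.

Lemma lfun_OP_mul a b : phi (OP S a * OP S b) = H a b.
Proof.
have [_ _ <-] := phi_GB; rewrite /sandwich /OP mulr_suml lfun_sum //.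
apply: eq_bigr => c _; rewrite mulr_sumr lfun_sum //; apply: eq_bigr => d _.
by rewrite -scalerAl -scalerAr !lfunZ // /moment; ring.
Qed.

Lemma lfun_OP_mul_block a b :
  phi (OP S a * OP S b) = if mdeg a == mdeg b then H a b else 0.
Proof. by rewrite lfun_OP_mul; case: eqP => // /H_diag. Qed.

Lemma lfun_OP_mul_eq0 a Q : (msize Q <= mdeg a)%N -> phi (OP S a * Q) = 0.
Proof.
have OPa_orth d : (mdeg d < mdeg a)%N -> phi (OP S a * OP S d) = 0.
  by move=> da; rewrite lfun_OP_mul_block ifN // neq_ltn da orbT.
move=> Qa; rewrite (mpolywE Qa) mulr_sumr lfun_sum //; apply: big1 => c _.
by rewrite -scalerAr lfunZ // (lfun_mulX_eq0 phi_lin S_tri OPa_orth (bmdeg c)) mulr0.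
Qed.

Lemma lfun_OP_mul_OP T a b : block_lower_unitriangular T -> mdeg a = mdeg b ->
  phi (OP S a * OP T b) = H a b.
Proof.
move=> T_tri ab; rewrite -(subrK (OP S b) (OP T b)) mulrDr lfunD //.
by rewrite lfun_OP_mul_eq0 ?add0r ?lfun_OP_mul // ab msize_OPB.
Qed.

Lemma gauss_borel_sym a b : H a b = H b a.
Proof. by rewrite -!lfun_OP_mul mulrC. Qed.

Hypothesis phi_qd : quasi_definite phi.

Lemma Hblock_unit m : fmx (fun a b : dmon D m => H (dmon_val a) (dmon_val b)) \in unitmx.
Proof.
apply/fmx_unitP => y yH0 b0.
pose Y := \sum_(b : dmon D m) y b *: OP S (dmon_val b).
have Y0 : Y = 0.
  apply: (quasi_definite_OP_eq0 phi_lin phi_qd S_tri (k := m.+1)).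
    by apply: msize_sum_leq => b _; apply: msizeZ_OP_leq; rewrite mdeg_dmon_val.
  move=> d dm; rewrite mulr_suml lfun_sum //.
  under eq_bigr do rewrite -scalerAl lfunZ // lfun_OP_mul.
  have [dmE|dmN] := eqVneq (mdeg d) m; last first.
    apply: big1 => b _; rewrite H_diag ?mulr0 // mdeg_dmon_val => md.
    by rewrite md eqxx in dmN.
  by subst m; exact: yH0 (dmon_of d).
have := congr1 (mcoeff (dmon_val b0)) Y0; rewrite mcoeff0 raddf_sum /=.
rewrite (bigD1 b0) //= big1 ?addr0 => [|b bb0].
  by rewrite mcoeffZ mcoeff_OP // (S_tri _ _).2 // eqxx mulr1.
rewrite mcoeffZ mcoeff_OP // (S_tri _ _).2 ?mdeg_dmon_val //.
by rewrite (inj_eq (@dmon_val_inj _ _)) (negbTE bb0) mulr0.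
Qed.

Lemma sum_Hinv_mulH k (r : mon -> C) d : (mdeg d < k)%N ->
  \sum_(m < k) \sum_(b : dmon D m) \sum_(c : dmon D m)
    r (dmon_val b) * Hinv H b c * H (dmon_val c) d = r d.
Proof.
move=> dk; rewrite (bigD1 (Ordinal dk)) //= [X in _ + X]big1 ?addr0 => [|m mdk]; last first.
  apply: big1 => b _; apply: big1 => c _; rewrite H_diag ?mulr0 // mdeg_dmon_val => md.
  by move: mdk; rewrite -val_eqE /= md eqxx.
have HinvH (b : dmon D (mdeg d)) :
    \sum_(c : dmon D (mdeg d)) Hinv H b c * H (dmon_val c) d = (b == dmon_of d)%:R.
  exact: mulVfmx (Hblock_unit _) b (dmon_of d).
under eq_bigr do (under eq_bigr do rewrite -mulrA; rewrite -mulr_sumr HinvH).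
rewrite (bigD1 (dmon_of d)) //= eqxx mulr1 big1 ?addr0 // => b /negbTE->.
by rewrite mulr0.
Qed.

Lemma OP_expansion E k : (msize E <= k)%N ->
  E = \sum_(m < k) \sum_(b : dmon D m) \sum_(c : dmon D m)
        (phi (E * OP S (dmon_val b)) * Hinv H b c) *: OP S (dmon_val c).
Proof.
move=> Ek; apply/eqP; rewrite -subr_eq0; apply/eqP.
apply: (quasi_definite_OP_eq0 phi_lin phi_qd S_tri (k := k)).
  rewrite msizeD_leq ?msizeN //.
  apply: msize_sum_leq => m _; apply: msize_sum_leq => b _; apply: msize_sum_leq => c _.
  by apply: msizeZ_OP_leq; rewrite mdeg_dmon_val.
move=> d dk; rewrite mulrBl lfunB //; apply/eqP; rewrite subr_eq0; apply/eqP.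
have := sum_Hinv_mulH (fun b => phi (E * OP S b)) dk; rewrite /= => <-.
rewrite mulr_suml lfun_sum //; apply: eq_bigr => m _.
rewrite mulr_suml lfun_sum //; apply: eq_bigr => b _.
rewrite mulr_suml lfun_sum //; apply: eq_bigr => c _.
by rewrite -[in X in _ = X]scalerAl lfunZ // lfun_OP_mul.
Qed.

Lemma OP_gram_solve T k (M : 'X_{1..D < k} -> 'X_{1..D < k} -> C) a :
  block_lower_unitriangular T ->
  (forall b c : 'X_{1..D < k}, phi (OP T b * OP T c) = M b c) -> mdeg a = k ->
  OP S a = OP T a - \sum_(b : 'X_{1..D < k}) \sum_(c : 'X_{1..D < k})
                      (phi (OP T a * OP T b) * Defs.finv M b c) *: OP T c.
Proof.
move=> T_tri TTM ak; have M_unit := gram_OP_unit phi_lin phi_qd T_tri TTM.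
apply/eqP; rewrite -subr_eq0 opprB addrCA addrC; apply/eqP.
apply: (quasi_definite_OP_eq0 phi_lin phi_qd T_tri (k := k)).
  apply: msizeD_leq; first by rewrite -[X in (_ <= X)%N]ak msize_OPB.
  apply: msize_sum_leq => b _; apply: msize_sum_leq => c _.
  exact: msizeZ_OP_leq (bmdeg c).
move=> d dk; rewrite mulrDl lfunD // mulrBl lfunB //.
rewrite lfun_OP_mul_eq0 ?sub0r; last by rewrite msize_OP_leq // ak.
have coef (b : 'X_{1..D < k}) : \sum_(c : 'X_{1..D < k})
    phi ((phi (OP T a * OP T b) * Defs.finv M b c) *: OP T c * OP T d) =
    phi (OP T a * OP T b) * (b == BMultinom dk)%:R.
  rewrite -(mulVfmx M_unit b (BMultinom dk)) mulr_sumr; apply: eq_bigr => c _.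
  by rewrite -[in X in X = _]scalerAl lfunZ // (TTM c (BMultinom dk)) mulrA.
apply/eqP; rewrite addrC subr_eq0; apply/eqP.
rewrite mulr_suml lfun_sum //.
under eq_bigr do rewrite mulr_suml (lfun_sum phi_lin) coef.
rewrite (bigD1 (BMultinom dk)) //= eqxx mulr1 big1 ?addr0 // => b /negbTE->.
by rewrite mulr0.
Qed.

End GaussBorel.

Section ChristoffelDarboux.
Variables (R : realType) (D : nat).
Local Notation C := R[i].
Local Notation mon := 'X_{1..D}.
Local Notation poly := {mpoly C[D]}.
Variables (S H : mon -> mon -> C) (N : nat) (x : 'I_D -> C).

Definition CDkernel_poly : poly :=
  \sum_(m < N.+1) \sum_(b : dmon D m) \sum_(c : dmon D m)
    (Hinv H b c * (OP S (dmon_val c)).@[x]) *: OP S (dmon_val b).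

Lemma CDkernel_polyE y : CDkernel_poly.@[y] = CDkernel S H N y x.
Proof.
rewrite /CDkernel /CDkernel_poly raddf_sum; apply: eq_bigr => m _.
rewrite raddf_sum; apply: eq_bigr => b _; rewrite raddf_sum; apply: eq_bigr => c _.
by rewrite /= mevalZ; ring.
Qed.

Lemma lfun_mul_CDkernel_poly (phi : poly -> C) Q : linear_functional phi ->
  phi (Q * CDkernel_poly) =
  \sum_(m < N.+1) \sum_(b : dmon D m) \sum_(c : dmon D m)
    phi (Q * OP S (dmon_val b)) * Hinv H b c * (OP S (dmon_val c)).@[x].
Proof.
move=> phi_lin; rewrite mulr_sumr lfun_sum //; apply: eq_bigr => m _.
rewrite mulr_sumr lfun_sum //; apply: eq_bigr => b _.
rewrite mulr_sumr lfun_sum //; apply: eq_bigr => c _.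
by rewrite -[in X in X = _]scalerAr lfunZ //; ring.
Qed.

End ChristoffelDarboux.

Section CurvePerturbation.
Variables (R : realType) (D : nat).
Local Notation C := R[i].
Local Notation mon := 'X_{1..D}.
Local Notation poly := {mpoly C[D]}.
Variables (u : poly -> C) (I : interval R) (gam : R -> 'I_D -> R) (w : R -> C).
Variables (S H Sh Hh : mon -> mon -> C).
Local Notation v := (curve_functional I gam w).
Local Notation uh := (fun p => u p + curve_functional I gam w p).
Hypotheses (u_lin : linear_functional u) (u_qd : quasi_definite u)
  (w_int : forall p : poly, cintegrable I (fun s => p.@[ptC gam s] * w s))
  (uh_qd : quasi_definite uh) (u_GB : gauss_borel u S H) (uh_GB : gauss_borel uh Sh Hh).

Let v_lin := curve_functional_linear w_int.
Let uh_lin := linear_functional_add u_lin v_lin.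
Let S_tri : block_lower_unitriangular S. Proof. by case: u_GB. Qed.
Let Sh_tri : block_lower_unitriangular Sh. Proof. by case: uh_GB. Qed.

Lemma curve_functional_mul p q :
  v (p * q) = cint I (fun s => p.@[ptC gam s] * q.@[ptC gam s] * w s).
Proof. by apply: eq_cint => s; rewrite mevalM. Qed.

Lemma uh_OP_mul b c :
  uh (OP S b * OP S c) = (if mdeg b == mdeg c then H b c else 0) + Amat I S gam w b c.
Proof. by rewrite /= (lfun_OP_mul_block u_lin u_GB) curve_functional_mul. Qed.

Lemma pi_curve_Sh_qdet n t (a : dmon D n) :
  pi_curve Sh gam (dmon_val a) t =
  qdet_last
    (fun b c : 'X_{1..D < n} => (if mdeg b == mdeg c then H b c else 0) + Amat I S gam w b c)
    (fun (b : 'X_{1..D < n}) (_ : unit) => pi_curve S gam b t)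
    (fun (a' : dmon D n) (c : 'X_{1..D < n}) => Amat I S gam w (dmon_val a') c)
    (fun (a' : dmon D n) (_ : unit) => pi_curve S gam (dmon_val a') t)
    a tt.
Proof.
have uhM (b c : 'X_{1..D < n}) := uh_OP_mul b c.
rewrite /pi_curve (OP_gram_solve uh_lin uh_GB uh_qd S_tri uhM (mdeg_dmon_val a)).
rewrite mevalB /qdet_last; congr (_ - _).
rewrite raddf_sum; apply: eq_bigr => b _; rewrite raddf_sum; apply: eq_bigr => c _.
by rewrite /= mevalZ uh_OP_mul mdeg_dmon_val ifN ?add0r // neq_ltn bmdeg orbT.
Qed.

Lemma meval_OP_Sh_CDkernel n x (a : dmon D n.+1) :
  (OP Sh (dmon_val a)).@[x] =
  (OP S (dmon_val a)).@[x]
  - cint I (fun s => pi_curve Sh gam (dmon_val a) s * CDkernel S H n (ptC gam s) x * w s).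
Proof.
set A := dmon_val a; have aE : mdeg A = n.+1 := mdeg_dmon_val a.
have coef m (b : dmon D m) : (m < n.+1)%N ->
    u ((OP Sh A - OP S A) * OP S (dmon_val b)) = - v (OP Sh A * OP S (dmon_val b)).
  move=> mn; have bA : (msize (OP S (dmon_val b)) <= mdeg A)%N.
    by rewrite aE msize_OP_leq // mdeg_dmon_val.
  rewrite mulrBl lfunB // (lfun_OP_mul_eq0 u_lin u_GB bA) subr0.
  by apply/eqP; rewrite -addr_eq0; apply/eqP; exact: (lfun_OP_mul_eq0 uh_lin uh_GB bA).
have AhA : (msize (OP Sh A - OP S A) <= n.+1)%N by rewrite -aE msize_OPB.
have cintE : cint I (fun s => pi_curve Sh gam A s * CDkernel S H n (ptC gam s) x * w s) =
    v (OP Sh A * CDkernel_poly S H n x).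
  by rewrite curve_functional_mul; apply: eq_cint => s; rewrite CDkernel_polyE.
have -> : (OP Sh A).@[x] = (OP Sh A - OP S A).@[x] + (OP S A).@[x].
  by rewrite -mevalD subrK.
rewrite (OP_expansion u_lin u_GB u_qd AhA) cintE lfun_mul_CDkernel_poly //.
rewrite addrC; congr (_ + _).
rewrite [LHS]raddf_sum -[RHS]sumrN; apply: eq_bigr => m _.
rewrite [LHS]raddf_sum -[RHS]sumrN; apply: eq_bigr => b _.
rewrite [LHS]raddf_sum -[RHS]sumrN; apply: eq_bigr => c _.
by rewrite /= mevalZ coef // !mulNr.
Qed.

Lemma Hh_H_cint n (a b : dmon D n) :
  Hh (dmon_val a) (dmon_val b) =
  H (dmon_val a) (dmon_val b)
  + cint I (fun s => pi_curve Sh gam (dmon_val a) s * pi_curve S gam (dmon_val b) s * w s).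
Proof.
have ab : mdeg (dmon_val a) = mdeg (dmon_val b) by rewrite !mdeg_dmon_val.
rewrite -(lfun_OP_mul_OP uh_lin uh_GB S_tri ab) curve_functional_mul; congr (_ + _).
by rewrite mulrC (lfun_OP_mul_OP u_lin u_GB Sh_tri (esym ab)) (gauss_borel_sym u_lin u_GB).
Qed.

End CurvePerturbation.

Unset Implicit Arguments.
Theorem mainTheorem17 (R : realType) (D : nat)
  (u : {mpoly R[i][D]} -> R[i]) (I : interval R)
  (gam : R -> 'I_D -> R) (w : R -> R[i])
  (S H Sh Hh : 'X_{1..D} -> 'X_{1..D} -> R[i]) (n : nat) :
  linear_functional u ->
  quasi_definite u ->
  smooth_curve I gam ->
  (forall p : {mpoly R[i][D]}, cintegrable I (fun s => p.@[ptC gam s] * w s)) ->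
  quasi_definite (fun p => u p + curve_functional I gam w p) ->
  gauss_borel u S H ->
  gauss_borel (fun p => u p + curve_functional I gam w p) Sh Hh ->
  (1 <= n)%N ->
  [/\ (forall t : R, t \in I -> forall a : dmon D n,
         pi_curve Sh gam (dmon_val a) t =
         qdet_last
           (fun b c : 'X_{1..D < n} =>
              (if mdeg b == mdeg c then H b c else 0) + Amat I S gam w b c)
           (fun (b : 'X_{1..D < n}) (_ : unit) => pi_curve S gam b t)
           (fun (a' : dmon D n) (c : 'X_{1..D < n}) =>
              Amat I S gam w (dmon_val a') c)
           (fun (a' : dmon D n) (_ : unit) => pi_curve S gam (dmon_val a') t)
           a tt),
      (forall (x : 'I_D -> R[i]) (a : dmon D n),
         (OP Sh (dmon_val a)).@[x] =
         (OP S (dmon_val a)).@[x]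
         - cint I (fun s => pi_curve Sh gam (dmon_val a) s
                            * CDkernel S H n.-1 (ptC gam s) x * w s)) &
      (forall a b : dmon D n,
         Hh (dmon_val a) (dmon_val b) =
         H (dmon_val a) (dmon_val b)
         + cint I (fun s => pi_curve Sh gam (dmon_val a) s
                            * pi_curve S gam (dmon_val b) s * w s))].
Proof.
move=> u_lin u_qd _ w_int uh_qd u_GB uh_GB n_gt0; split.
- by move=> t _ a; exact: (pi_curve_Sh_qdet u_lin w_int uh_qd u_GB uh_GB).
- case: n n_gt0 => // n _ x a.
  exact: (meval_OP_Sh_CDkernel u_lin u_qd w_int u_GB uh_GB).
- by move=> a b; exact: (Hh_H_cint u_lin w_int u_GB uh_GB).
Qed.
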